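(* Every fragile graph $G$ of girth at least $4$ with $|V(G)|\geq 3$ satisfies $|E(G)|\leq 2|V(G)|-4$. Consequently every non-null fragile graph of girth at least $4$ has a vertex of degree at most $3$ and is $4$-colourable.
   Context: All graphs are finite and simple. A graph is $k$-connected if it has at least $k+1$ vertices and no vertex cutset with at most $k-1$ vertices. A graph is fragile if it has no $3$-connected subgraph. The girth of a graph is the length of its shortest cycle (infinite if the graph is acyclic). *)

From mathcomp Require Import all_boot.
Set Implicit Arguments. Unset Strict Implicit. Unset Printing Implicit Defensive.

Definition simple_graph (T : finType) (e : rel T) : Prop :=
  symmetric e /\ irreflexive e.

Definition edges (T : finType) (e : rel T) : {set {set T}} :=
  [set E : {set T} | [exists x, exists y, (E == [set x; y]) && e x y]].

Definition degree (T : finType) (e : rel T) (x : T) : nat := #|[set y | e x y]|.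

Definition subgraph (T : finType) (e : rel T) (S : {set T}) (f : rel T) : Prop :=
  symmetric f /\ forall x y, f x y -> [&& e x y, x \in S & y \in S].

Definition connected_on (T : finType) (f : rel T) (A : {set T}) : Prop :=
  forall u v, u \in A -> v \in A ->
    connect [rel x y | [&& f x y, x \in A & y \in A]] u v.

Definition k_connected (T : finType) (S : {set T}) (f : rel T) (k : nat) : Prop :=
  k.+1 <= #|S| /\
  forall X : {set T}, X \subset S -> #|X| <= k.-1 -> connected_on f (S :\: X).

Definition fragile (T : finType) (e : rel T) : Prop :=
  forall (S : {set T}) (f : rel T), subgraph e S f -> ~ k_connected S f 3.

Definition girth_ge (T : finType) (e : rel T) (g : nat) : Prop :=
  forall c : seq T, uniq c -> 3 <= size c -> cycle e c -> g <= size c.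

Definition colourable (T : finType) (e : rel T) (k : nat) : Prop :=
  exists c : T -> 'I_k, forall x y, e x y -> c x != c y.

From mathcomp Require Import all_boot zify.
From Stdlib Require Import Classical.
Set Implicit Arguments. Unset Strict Implicit. Unset Printing Implicit Defensive.

(* Let arcs A be the set of ordered adjacent pairs inside a vertex set A; the
   edge bound is #|arcs A| <= 4|A| - 8 for |A| >= 3, proved by induction on
   |A|.  For |A| = 3 it is triangle-freeness.  For |A| >= 4 the graph induced
   on A is not 3-connected, so a set X of at most 2 vertices separates some
   component C of A - X from the rest.  Every arc of A then lies inside C + X
   or inside A - C; these sets are smaller than A, their sizes add up to
   |A| + |X|, and the two bounds give 4(|A| + |X|) - 16 <= 4|A| - 8.
   Applied to every vertex set, the bound makes the graph 3-degenerate, and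
   greedy colouring then needs only 4 colours. *)

Section Arcs.
Variables (T : finType) (e : rel T).

Definition arcs (A : {set T}) : {set T * T} :=
  [set p | [&& e p.1 p.2, p.1 \in A & p.2 \in A]].

Definition induced (A : {set T}) : rel T :=
  [rel x y | [&& e x y, x \in A & y \in A]].

Definition deg_in (A : {set T}) (x : T) : nat := #|[set y in A | e x y]|.

Definition component (B : {set T}) (u : T) : {set T} :=
  [set w in B | connect (induced B) u w].

Lemma sum_deg_in (A : {set T}) : \sum_(x in A) deg_in A x = #|arcs A|.
Proof.
rewrite -sum1_card (partition_big (fun p : T * T => p.1) (mem A)) => [|[x y]];
  last by rewrite inE => /and3P[].
apply: eq_bigr => x xA; rewrite sum1_card.
have pair_inj : injective (pair x : T -> T * T) by move=> y1 y2 [->].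
rewrite /deg_in -(card_imset _ pair_inj); apply: eq_card => -[a b].
rewrite -[RHS]/(((a, b) \in arcs A) && (a == x)) inE /=.
apply/imsetP/andP => [[y] | [/and3P[eab aA bA] /eqP ax]].
  by rewrite inE => /andP[yA exy] [-> ->]; rewrite exy xA yA eqxx.
by subst a; exists b; rewrite // inE bA eab.
Qed.

Lemma deg_in_le_card (A : {set T}) x : deg_in A x <= #|A|.
Proof. by apply: subset_leq_card; apply/subsetP => y; rewrite inE => /andP[]. Qed.

Lemma component_sub (B : {set T}) (u : T) : component B u \subset B.
Proof. by apply/subsetP => w; rewrite inE => /andP[]. Qed.

Lemma mem_component (B : {set T}) (u : T) : u \in B -> u \in component B u.
Proof. by move=> uB; rewrite inE uB connect0. Qed.

Lemma component_no_edge (B : {set T}) (u : T) :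
  {in component B u & B :\: component B u, forall x y, ~~ e x y}.
Proof.
move=> x y; rewrite inE => /andP[xB ux]; rewrite inE => /andP[yC yB].
apply: contra yC => exy; rewrite inE yB.
by apply: connect_trans ux (connect1 _); apply/and3P.
Qed.

Hypothesis e_irr : irreflexive e.

Lemma card_arcs_le1 (A : {set T}) : #|A| <= 1 -> #|arcs A| = 0.
Proof.
move=> /card_le1_eqP A1; apply/eqP; rewrite cards_eq0; apply/eqP/setP => -[x y].
rewrite !inE /=; apply/negbTE/and3P => -[exy xA yA].
by move: exy; rewrite (A1 _ _ xA yA) e_irr.
Qed.

Lemma card_arcs2 (A : {set T}) : #|A| = 2 -> #|arcs A| <= 2.
Proof.
move=> /eqP/cards2P[a [b [ab ->]]].
apply: leq_trans (_ : #|[set (a, b); (b, a)]| <= 2); last first.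
  by rewrite cards2; case: (_ != _).
apply: subset_leq_card; apply/subsetP => -[x y]; rewrite !inE /=.
case/and3P=> exy /orP[]/eqP xe /orP[]/eqP ye; subst x y; rewrite ?eqxx ?orbT //.
all: by rewrite e_irr in exy.
Qed.

Lemma girth4_no_triangle a b c : girth_ge e 4 -> e a b -> e b c -> e c a -> False.
Proof.
move=> girth eab ebc eca.
have neq x y : e x y -> x != y by apply: contraTneq => ->; rewrite e_irr.
have := girth [:: a; b; c]; rewrite /= !inE negb_or.
rewrite (neq a b) // [a == c]eq_sym (neq c a) // (neq b c) //.
by rewrite eab ebc eca => /(_ isT isT isT).
Qed.

Hypothesis e_sym : symmetric e.

Lemma double_card_edges_le : 2 * #|edges e| <= #|arcs setT|.
Proof.
rewrite -[#|arcs _|]sum1_card.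
rewrite (partition_big (fun p : T * T => [set p.1; p.2]) (mem (edges e)));
  last by move=> [x y]; rewrite !inE /= => /andP[exy _];
          apply/existsP; exists x; apply/existsP; exists y; rewrite eqxx exy.
rewrite mulnC -sum_nat_const; apply: leq_sum => E.
rewrite inE => /existsP[x /existsP[y /andP[/eqP-> exy]]]; rewrite sum1_card.
have xy : x != y by apply: contraTneq exy => ->; rewrite e_irr.
apply: leq_trans (_ : #|[set (x, y); (y, x)]| <= _).
  by rewrite cards2 xpair_eqE (negbTE xy).
apply: subset_leq_card; apply/subsetP => p; rewrite !inE => /orP[]/eqP->.
  by rewrite unfold_in /= !inE /= exy eqxx.
by rewrite unfold_in /= !inE /= e_sym exy setUC eqxx.
Qed.

Lemma induced_subgraph (A : {set T}) : subgraph e A (induced A).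
Proof. by split=> // x y; rewrite /induced /= e_sym [(x \in A) && _]andbC. Qed.

Lemma card_arcs_split (A X C : {set T}) :
  C \subset A :\: X -> {in C & (A :\: X) :\: C, forall x y, ~~ e x y} ->
  #|arcs A| <= #|arcs (C :|: X)| + #|arcs (A :\: C)|.
Proof.
move=> sCAX noedge; apply: leq_trans (leq_card_setU _ _); apply: subset_leq_card.
apply/subsetP => -[x y]; rewrite !inE /= => /and3P[exy xA yA].
rewrite exy xA yA /= !andbT.
have inCX z w : z \in C -> w \in A -> e z w -> (w \in C) || (w \in X).
  move=> zC wA ezw; apply/contraTT: ezw; rewrite negb_or => /andP[wC wX].
  by apply: noedge; rewrite // !inE wC wX wA.
case xC: (x \in C); case yC: (y \in C) => //=; rewrite ?orbT //.
- by rewrite orbF; have := inCX x y xC yA exy; rewrite yC.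
- by rewrite andbT orbF; have := inCX y x yC xA; rewrite e_sym xC => /(_ exy).
Qed.

Lemma card_arcs3 (A : {set T}) : girth_ge e 4 -> #|A| = 3 -> #|arcs A| <= 4.
Proof.
move=> girth A3.
have nonedge u v w : u \in A -> v \in A -> w \in A ->
    u != v -> u != w -> v != w -> ~~ e u v -> #|arcs A| <= 4.
  move=> uA vA wA uv uw vw nuv.
  have defA : A = [set u; v; w].
    apply/esym/eqP; rewrite eqEcard A3; apply/andP; split.
      by apply/subsetP => z; rewrite !inE => /orP[/orP[]|]/eqP->.
    by rewrite -setUA cardsU1 cards2 !inE negb_or uv uw vw.
  have sCAX : [set u] \subset A :\: [set w] by rewrite sub1set !inE uw uA.
  have noedge : {in [set u] & (A :\: [set w]) :\: [set u], forall x y, ~~ e x y}.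
    move=> x y; rewrite defA !inE => /eqP-> /and3P[yu yw].
    by rewrite (negbTE yu) (negbTE yw) orbF => /eqP->.
  apply: leq_trans (card_arcs_split sCAX noedge) _.
  rewrite -[4]/(2 + 2) leq_add // card_arcs2 // ?cards2 ?uw //.
  by have := cardsD1 u A; rewrite A3 uA => -[].
have /card_gt0P[a aA] : 0 < #|A| by rewrite A3.
have /cards2P[b [c [bc defAa]]] : #|A :\ a| == 2.
  by have := cardsD1 a A; rewrite aA A3 => -[->].
have : b \in A :\ a /\ c \in A :\ a by rewrite defAa !inE !eqxx orbT.
rewrite !inE => -[/andP[ba bA] /andP[ca cA]].
have ab : a != b by rewrite eq_sym.
have ac : a != c by rewrite eq_sym.
have cb : c != b by rewrite eq_sym.
have [eab|] := boolP (e a b); last exact: (nonedge a b c).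
have [ebc|] := boolP (e b c); last exact: (nonedge b c a).
have [eca|] := boolP (e c a); last exact: (nonedge c a b).
by case: (girth4_no_triangle girth eab ebc eca).
Qed.

Lemma degenerate_colourable k :
  (forall A : {set T}, 0 < #|A| -> exists2 x, x \in A & deg_in A x <= k) ->
  colourable e k.+1.
Proof.
move=> low_deg.
have colour_in n (A : {set T}) : #|A| <= n ->
    exists c : T -> 'I_k.+1, {in A &, forall x y, e x y -> c x != c y}.
  elim: n A => [|n IH] A leAn.
    exists (fun=> ord0) => x y.
    by move: leAn; rewrite leqn0 cards_eq0 => /eqP->; rewrite inE.
  have [/eqP A0|/low_deg[x xA degx]] := posnP #|A|.
    by exists (fun=> ord0) => y z; move: A0; rewrite cards_eq0 => /eqP->; rewrite inE.
  have [c proper] := IH (A :\ x) ltac:(have := cardsD1 x A; rewrite xA; lia).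
  pose used := [set c y | y in [set y in A | e x y]].
  have /card_gt0P[col col_free] : 0 < #|~: used|.
    have := leq_imset_card c [set y in A | e x y].
    rewrite -/used; move: degx; rewrite /deg_in.
    by have := cardsC used; rewrite card_ord; lia.
  rewrite inE in col_free.
  have usedP y : y \in A -> e x y -> c y \in used.
    by move=> yA exy; apply: imset_f; rewrite inE yA exy.
  exists (fun z => if z == x then col else c z) => y z yA zA eyz /=.
  have [yx|yx] := eqVneq y x; have [zx|zx] := eqVneq z x; subst.
  - by rewrite e_irr in eyz.
  - by apply: contraNneq col_free => ->; apply: usedP.
  - by apply: contraNneq col_free => <-; apply: usedP; rewrite // e_sym.
  - by apply: proper; rewrite // !inE ?yx ?zx.
have [c proper] := colour_in _ [set: T] (leqnn _).
by exists c => x y; apply: proper; rewrite inE.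
Qed.
End Arcs.

Section Fragile.
Variables (T : finType) (e : rel T).
Hypotheses (e_irr : irreflexive e) (e_sym : symmetric e).
Hypotheses (e_fragile : fragile e) (e_girth : girth_ge e 4).

Lemma fragile_cut (A : {set T}) : 4 <= #|A| ->
  exists (X : {set T}) u v,
    [/\ X \subset A, #|X| <= 2, u \in A :\: X, v \in A :\: X
      & ~~ connect (induced e (A :\: X)) u v].
Proof.
move=> A4; apply: NNPP => no_cut.
apply: (e_fragile (induced_subgraph e_sym A)); split=> // X XA X2 u v uB vB.
have induced_setD :
    [rel x y | [&& induced e A x y, x \in A :\: X & y \in A :\: X]] =2 induced e (A :\: X).
  move=> x y; rewrite /induced /= !inE.
  by case: (x \in A); case: (y \in A); rewrite ?andbT ?andbF.
rewrite (eq_connect induced_setD); apply/negPn/negP => nc.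
by apply: no_cut; exists X, u, v.
Qed.

Lemma card_arcs_fragile (A : {set T}) : 3 <= #|A| -> #|arcs e A| + 8 <= 4 * #|A|.
Proof.
elim: {A}_.+1 {-2}A (ltnSn #|A|) => // n IH A ltAn A3.
have [A3e|A_ne3] := eqVneq #|A| 3.
  by have := card_arcs3 e_irr e_sym e_girth A3e; lia.
have {A3 A_ne3} A4 : 4 <= #|A| by lia.
have smaller (B : {set T}) : #|B| < #|A| ->
    [/\ 3 <= #|B| -> #|arcs e B| + 8 <= 4 * #|B|,
        #|B| = 2 -> #|arcs e B| <= 2 & #|B| <= 1 -> #|arcs e B| = 0].
  move=> ltBA; split; [apply: IH; lia | exact: card_arcs2 | exact: card_arcs_le1].
have [X [u [v [XA X2 uAX vAX nuv]]]] := fragile_cut A4.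
pose C := component e (A :\: X) u.
have sCAX : C \subset A :\: X := component_sub e _ u.
have uC : u \in C := mem_component e uAX.
have vC : v \notin C by rewrite inE (negbTE nuv) andbF.
have notCX z : z \in X -> z \notin C.
  by move=> zX; apply: contraL zX => /(subsetP sCAX); rewrite inE => /andP[].
have card_CX : #|C :|: X| = #|C| + #|X|.
  rewrite cardsU; suff -> : C :&: X = set0 by rewrite cards0 subn0.
  by apply/setP => z; rewrite !inE; case zX: (z \in X); rewrite ?notCX ?andbF.
have card_AC : #|C| + #|A :\: C| = #|A|.
  by rewrite -(cardsID C A) (setIidPr (subset_trans sCAX (subsetDl _ _))).
have card_XAC : #|X| < #|A :\: C|.
  have [vX vA] : v \notin X /\ v \in A by apply/andP; rewrite -in_setD.
  apply: leq_trans (_ : #|v |: X| <= _); first by rewrite cardsU1 vX.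
  apply: subset_leq_card; apply/subsetP => z; rewrite in_setU1 in_setD.
  by case/orP=> [/eqP->|zX]; rewrite ?vC ?vA // notCX // (subsetP XA).
have card_C : 0 < #|C| by apply/card_gt0P; exists u.
have [CX3 CX2 CX1] := smaller (C :|: X) ltac:(lia).
have [AC3 AC2 AC1] := smaller (A :\: C) ltac:(lia).
have := card_arcs_split e_sym sCAX (@component_no_edge _ e _ u).
lia.
Qed.

Lemma fragile_low_deg_in (A : {set T}) :
  0 < #|A| -> exists2 x, x \in A & deg_in e A x <= 3.
Proof.
move=> /card_gt0P[x0 x0A]; have [A2|A3] := leqP #|A| 2.
  by exists x0; rewrite // (leq_trans (deg_in_le_card e A x0)) // (leq_trans A2).
have [x /andP[xA deg_x]|high_deg] := pickP [pred x in A | deg_in e A x <= 3].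
  by exists x.
have := card_arcs_fragile A3; rewrite -sum_deg_in.
have : \sum_(x in A) 4 <= \sum_(x in A) deg_in e A x.
  by apply: leq_sum => x xA; have := high_deg x; rewrite /= xA ltnNge => /negbT.
rewrite sum_nat_const; lia.
Qed.

End Fragile.

Theorem mainTheorem5 :
  (forall (T : finType) (e : rel T), simple_graph e -> fragile e -> girth_ge e 4 ->
     3 <= #|T| -> #|edges e| <= 2 * #|T| - 4)
  /\
  (forall (T : finType) (e : rel T), simple_graph e -> fragile e -> girth_ge e 4 ->
     0 < #|T| -> (exists x : T, degree e x <= 3) /\ colourable e 4).
Proof.
split=> T e [e_sym e_irr] e_fragile e_girth T_gt.
  have := double_card_edges_le e_irr e_sym.
  have := card_arcs_fragile e_irr e_sym e_fragile e_girth (A := setT).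
  by rewrite cardsT => /(_ T_gt); lia.
have low_deg := @fragile_low_deg_in _ _ e_irr e_sym e_fragile e_girth.
split; last exact: (degenerate_colourable e_irr e_sym low_deg).
rewrite -cardsT in T_gt; have [x _ deg_x] := low_deg _ T_gt.
exists x; rewrite /degree (eq_card (B := [set y in setT | e x y])) //.
by move=> y; rewrite !inE.
Qed.
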